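(* Let $q\geq4$ be an integer, $n=q^2-1$, and let $A_0=I,A_1,A_2,A_3$ be the adjacency matrices of a symmetric 3-class association scheme on $n$ points with first eigenmatrix \[ P=\begin{bmatrix}1&\frac{q^2}{2}-q&\frac{q^2}{2}&q-2\\ 1&\frac q2&-\frac q2&-1\\ 1&-\frac q2+1&-\frac q2&q-2\\ 1&-\frac q2&\frac q2&-1\end{bmatrix}. \] Let $w_1,w_2,w_3$ be nonzero complex numbers satisfying one of the conditions (i)--(vi) below, so that $W=A_0+w_1A_1+w_2A_2+w_3A_3$ is a type-II matrix. Then $W$ is a complex Hadamard matrix if and only if $(w_1,w_2,w_3)$ satisfies (iii), (iv) or (v), or satisfies (vi) with $r=\sqrt{(17q-1)(q-1)}>0$. The conditions are: (i) $w_1=w_2=w_3$ and $w_3+\frac1{w_3}+q^2-3=0$; (ii) $w_3+\frac1{w_3}+q^2-3=0$ and $w_1=w_2=\frac{-(q-3)w_3+(q-1)}{q^2-2q-1}$; (iii) $w_1+\frac1{w_1}=\frac{2(q^2-6)}{q^2-4}$, $w_2=-1$, $w_3=w_1$; (iv) $w_1=w_3=1$ and $w_2+\frac1{w_2}=\frac{-2(q^2-2)}{q^2}$; (v) $w_1+\frac1{w_1}=-\frac2q$, $w_2=\frac1{w_1}$, $w_3=1$; (vi) for a real number $r$ with $r^2=(17q-1)(q-1)$, with $a_{0,1}=\frac{-(q-1)(q-2)+(q+2)r}{2q(q+1)}$, $a_{0,2}=\frac{(q+2)(q-1)-(q-2)r}{2q(q-3)}$, $a_{0,3}=\frac{5q^2-2q-19-(q-1)r}{2(q+1)(q-3)}$,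 $a_{1,2}=\frac{2(-q^4+2q^3+4q^2-10q+1+(q-1)r)}{q^2(q+1)(q-3)}$, $a_{1,3}=-a_{0,2}$: $w_1+\frac1{w_1}=a_{0,1}$ and $w_i=\frac{w_1^2-1}{a_{1,i}w_1-a_{0,i}}$ for $i=2,3$.
   Context: A symmetric association scheme with adjacency matrices $A_0=I,A_1,\dots,A_d$: symmetric $(0,1)$-matrices summing to $J$ whose span is closed under multiplication; with primitive idempotents $E_0=\frac1nJ,\dots,E_d$ the first eigenmatrix is defined by $A_j=\sum_iP_{i,j}E_i$. A type-II matrix is an $n\times n$ matrix $W$ with nonzero complex entries such that $W(W^{(-)})^\top=nI$ ($W^{(-)}$ the entrywise inverse). A complex Hadamard matrix is an $n\times n$ complex matrix $H$ whose entries have absolute value $1$ and $HH^*=nI$. *)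

From HB Require Import structures.
From mathcomp Require Import all_boot all_order all_algebra.
Set Implicit Arguments. Unset Strict Implicit. Unset Printing Implicit Defensive.
Import Order.TTheory GRing.Theory Num.Theory.
Local Open Scope ring_scope.

Definition sym_assoc_scheme (F : fieldType) (n d : nat)
    (A : 'I_d.+1 -> 'M[F]_n) : Prop :=
  [/\ A ord0 = 1%:M,
      forall i, (A i)^T = A i,
      forall i x y, A i x y = 0 \/ A i x y = 1,
      \sum_i A i = const_mx 1
    & forall i j, exists c : 'I_d.+1 -> F, A i *m A j = \sum_k c k *: A k].

Definition first_eigenmatrix (F : fieldType) (n d : nat)
    (A : 'I_d.+1 -> 'M[F]_n) (P : 'M[F]_d.+1) : Prop :=
  exists E : 'I_d.+1 -> 'M[F]_n,
    [/\ E ord0 = n%:R^-1 *: const_mx 1,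
        forall i, E i != 0,
        forall i j, E i *m E j = if i == j then E i else 0,
        \sum_i E i = 1%:M
      & (forall i, exists c : 'I_d.+1 -> F, E i = \sum_k c k *: A k) /\
        (forall j, A j = \sum_i P i j *: E i)].

Definition complex_hadamard (C : numClosedFieldType) (n : nat)
    (H : 'M[C]_n) : Prop :=
  (forall i j, `|H i j| = 1) /\
  H *m (\matrix_(i, j) (H j i)^*) = n%:R%:M.

Definition Pq (C : numClosedFieldType) (q : nat) : 'M[C]_4 :=
  let Q : C := q%:R in
  \matrix_(i < 4, j < 4)
   match nat_of_ord i, nat_of_ord j with
   | 0, 0 => 1 | 0, 1 => Q ^+ 2 / 2 - Q | 0, 2 => Q ^+ 2 / 2 | 0, _ => Q - 2
   | 1, 0 => 1 | 1, 1 => Q / 2 | 1, 2 => - (Q / 2) | 1, _ => -1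
   | 2, 0 => 1 | 2, 1 => - (Q / 2) + 1 | 2, 2 => - (Q / 2) | 2, _ => Q - 2
   | _, 0 => 1 | _, 1 => - (Q / 2) | _, 2 => Q / 2 | _, _ => -1
   end.

Section Conds.
Variables (C : numClosedFieldType) (q : nat).
Let Q : C := q%:R.

Definition cond_i (w1 w2 w3 : C) : Prop :=
  w1 = w2 /\ w2 = w3 /\ w3 + w3^-1 + Q ^+ 2 - 3 = 0.
Definition cond_ii (w1 w2 w3 : C) : Prop :=
  w3 + w3^-1 + Q ^+ 2 - 3 = 0 /\
  w1 = (- (Q - 3) * w3 + (Q - 1)) / (Q ^+ 2 - 2 * Q - 1) /\ w2 = w1.
Definition cond_iii (w1 w2 w3 : C) : Prop :=
  w1 + w1^-1 = 2 * (Q ^+ 2 - 6) / (Q ^+ 2 - 4) /\ w2 = -1 /\ w3 = w1.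
Definition cond_iv (w1 w2 w3 : C) : Prop :=
  w1 = 1 /\ w3 = 1 /\ w2 + w2^-1 = - (2 * (Q ^+ 2 - 2)) / Q ^+ 2.
Definition cond_v (w1 w2 w3 : C) : Prop :=
  w1 + w1^-1 = - (2 / Q) /\ w2 = w1^-1 /\ w3 = 1.

Definition a01 (r : C) := (- ((Q - 1) * (Q - 2)) + (Q + 2) * r) / (2 * Q * (Q + 1)).
Definition a02 (r : C) := ((Q + 2) * (Q - 1) - (Q - 2) * r) / (2 * Q * (Q - 3)).
Definition a03 (r : C) :=
  (5 * Q ^+ 2 - 2 * Q - 19 - (Q - 1) * r) / (2 * (Q + 1) * (Q - 3)).
Definition a12 (r : C) :=
  2 * (- Q ^+ 4 + 2 * Q ^+ 3 + 4 * Q ^+ 2 - 10 * Q + 1 + (Q - 1) * r)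
    / (Q ^+ 2 * (Q + 1) * (Q - 3)).
Definition a13 (r : C) := - a02 r.

Definition cond_vi (r w1 w2 w3 : C) : Prop :=
  [/\ r \is Num.real,
      r ^+ 2 = (17 * Q - 1) * (Q - 1),
      w1 + w1^-1 = a01 r,
      w2 = (w1 ^+ 2 - 1) / (a12 r * w1 - a02 r)
    & w3 = (w1 ^+ 2 - 1) / (a13 r * w1 - a03 r)].
End Conds.

From HB Require Import structures.
From mathcomp Require Import all_boot all_order all_algebra.
From mathcomp Require Import ring zify.
Set Implicit Arguments.
Unset Strict Implicit.
Import Order.TTheory GRing.Theory Num.Theory.
Local Open Scope ring_scope.

(* The classes A_j are symmetric 0/1 matrices partitioning J, so W has
   unimodular entries iff the weights w_j of the nonzero classes are
   unimodular, and then W W^* = \sum_i |l_i|^2 E_i with l_i = \sum_j P_ij w_j: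
   W is Hadamard iff moreover |l_i|^2 = n for all i.
   A nonzero w with w + 1/w = t real is unimodular when |t| < 2, while
   |w + 1/w| <= 2 for unimodular w.  The latter rules out (i) and (ii), where
   |w_3 + 1/w_3| = q^2 - 3, and (vi) with r < 0, where w_1 + 1/w_1 < -2.
   In the remaining cases each l_i is c_i + e_i u with c_i, e_i real and u the
   unimodular root of u + 1/u = t, so |l_i|^2 = c_i^2 + c_i e_i t + e_i^2 is
   an explicit rational function of q (and r) equal to n = q^2 - 1.  In case
   (vi) these identities only hold modulo r^2 = (17q-1)(q-1); they are checked
   on the rational parametrization q = (t^2-1)/(t^2-17), r = 16t/(t^2-17) of
   that conic. *)

Section Scheme.
Variables (C : numClosedFieldType) (n d : nat) (A : 'I_d.+1 -> 'M[C]_n).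
Hypothesis hA : sym_assoc_scheme A.

Lemma scheme_class x y : exists j, forall i, A i x y = (i == j)%:R.
Proof.
case: hA => _ _ h01 hJ _.
have hb i : A i x y = (A i x y == 1)%:R.
  by case: (h01 i x y) => ->; rewrite ?eqxx // eq_sym oner_eq0.
have /sum_nat_eq1 [j [_ hj h0]] : (\sum_i ((A i x y == 1%R) : nat) == 1)%N.
  rewrite -(@pnatr_eq1 C) natr_sum.
  under eq_bigr do rewrite -hb.
  by rewrite -summxE hJ mxE.
exists j => i; rewrite hb; case: (eqVneq i j) => [-> | /h0 -> //].
by rewrite hj.
Qed.

Lemma scheme_entry_neq0 j x y : A j x y != 0 -> A j x y = 1.
Proof. by case: hA => _ _ h01 _ _; case: (h01 j x y) => ->; rewrite ?eqxx. Qed.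

Variable w : 'I_d.+1 -> C.
Local Notation W := (\sum_j w j *: A j).

Lemma weighted_entry j x y : A j x y = 1 -> W x y = w j.
Proof.
have [k hk] := scheme_class x y.
rewrite hk; have [-> _ | _] := eqVneq j k; last by move/eqP; rewrite eq_sym oner_eq0.
rewrite summxE (bigD1 k) //= mxE hk eqxx mulr1 big1 ?addr0 // => i /negbTE hi.
by rewrite mxE hk hi mulr0.
Qed.

Lemma weighted_entries_unimodular : (forall j, `|w j| = 1) -> forall x y, `|W x y| = 1.
Proof.
move=> hw x y; have [k hk] := scheme_class x y.
by rewrite (@weighted_entry k) // hk eqxx.
Qed.

Lemma weight_unimodular_of_entries j : A j != 0 -> (forall x y, `|W x y| = 1) -> `|w j| = 1.
Proof.
move=> hAj hW; have /existsP [x /existsP [y hxy]] : [exists x, exists y, A j x y != 0].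
  apply: contraNT hAj => /existsPn hx; apply/eqP/matrixP => x y; rewrite mxE.
  by have /existsPn /(_ y) := hx x; rewrite negbK => /eqP.
by rewrite -(hW x y) (weighted_entry (scheme_entry_neq0 hxy)).
Qed.

Lemma weighted_adjoint : \matrix_(x, y) (W y x)^* = \sum_j (w j)^* *: A j.
Proof.
case: hA => _ hsym h01 _ _.
apply/matrixP => x y; rewrite !mxE !summxE rmorph_sum; apply: eq_bigr => j _.
rewrite !mxE rmorphM /=.
have -> : A j y x = A j x y by rewrite -{1}hsym mxE.
by case: (h01 j x y) => ->; rewrite ?conjC0 ?conjC1.
Qed.
End Scheme.

Section OrthogonalIdempotents.
Variables (R : comNzRingType) (n m : nat) (E : 'I_m -> 'M[R]_n).
Hypothesis hE : forall i j, E i *m E j = if i == j then E i else 0.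

Lemma mulmx_suml_idem (a : 'I_m -> R) j : (\sum_i a i *: E i) *m E j = a j *: E j.
Proof.
rewrite mulmx_suml (bigD1 j) //= -scalemxAl hE eqxx big1 ?addr0 // => i /negbTE hij.
by rewrite -scalemxAl hE hij scaler0.
Qed.

Lemma mulmx_sum_idem (a b : 'I_m -> R) :
  (\sum_i a i *: E i) *m (\sum_i b i *: E i) = \sum_i (a i * b i) *: E i.
Proof.
rewrite mulmx_sumr; apply: eq_bigr => i _.
by rewrite -scalemxAr mulmx_suml_idem scalerA mulrC.
Qed.
End OrthogonalIdempotents.

Section Eigenmatrix.
Variables (C : numClosedFieldType) (n d : nat) (A : 'I_d.+1 -> 'M[C]_n) (P : 'M[C]_d.+1).
Hypotheses (hA : sym_assoc_scheme A) (hP : first_eigenmatrix A P).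

Lemma adjacency_neq0 j : P 0 j != 0 -> A j != 0.
Proof.
case: hP => E [_ hE0 hEE _ [_ hAE]] hPj; apply: contraNneq (hE0 0) => hAj.
have := mulmx_suml_idem hEE (fun i => P i j) 0.
by rewrite -hAE hAj mul0mx => /esym/eqP; rewrite scaler_eq0 (negbTE hPj).
Qed.

Lemma hadamard_of_eigenvalues (w : 'I_d.+1 -> C) :
  (forall i j, P i j \is Num.real) -> (forall j, `|w j| = 1) ->
  (forall i, `|\sum_j P i j * w j| ^+ 2 = n%:R) ->
  complex_hadamard (\sum_j w j *: A j).
Proof.
move=> hPr hw hev; split; first exact: weighted_entries_unimodular.
case: hP => E [_ _ hEE hE1 [_ hAE]].
have spectral v : \sum_j v j *: A j = \sum_i (\sum_j P i j * v j) *: E i.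
  under eq_bigr do rewrite hAE scaler_sumr.
  rewrite exchange_big; apply: eq_bigr => i _; rewrite scaler_suml.
  by apply: eq_bigr => j _; rewrite scalerA mulrC.
rewrite weighted_adjoint // !spectral (mulmx_sum_idem hEE).
under eq_bigr => i _.
  have -> : \sum_j P i j * (w j)^* = (\sum_j P i j * w j)^*.
    by rewrite rmorph_sum; apply: eq_bigr => j _; rewrite rmorphM /= (conj_Creal (hPr i j)).
  by rewrite -normCK hev; over.
by rewrite -scaler_sumr hE1 scalemx1.
Qed.
End Eigenmatrix.

Lemma ratio_affine_of_trace (F : fieldType) (a b s y : F) : y != 0 -> y + y^-1 = s ->
  a ^+ 2 - a * b * s + b ^+ 2 = 4 - s ^+ 2 -> 4 - s ^+ 2 != 0 -> a * y - b != 0 ->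
  (y ^+ 2 - 1) / (a * y - b) =
  (2 * b - a * s) / (4 - s ^+ 2) + (2 * a - b * s) / (4 - s ^+ 2) * y.
Proof.
move=> hy hs hN hD hd.
have hy2 : y ^+ 2 - s * y + 1 = 0 by rewrite -hs; field.
have -> : (2 * b - a * s) / (4 - s ^+ 2) + (2 * a - b * s) / (4 - s ^+ 2) * y =
  ((2 * b - a * s) + (2 * a - b * s) * y) / (4 - s ^+ 2) by field.
apply/eqP; rewrite eqr_div // -hN -subr_eq0; apply/eqP.
transitivity (- ((2 * a - b * s) * a - (a ^+ 2 - a * b * s + b ^+ 2)) * (y ^+ 2 - s * y + 1)).
  by ring.
by rewrite hy2 mulr0.
Qed.

Section Unimodular.
Variable C : numClosedFieldType.
Implicit Types (a b c e s t w : C).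

Lemma conj_unimodular w : `|w| = 1 -> w^* = w^-1.
Proof. by move=> h; rewrite invC_norm h expr1n invr1 mul1r. Qed.

Lemma trace_unimodular_le2 w : `|w| = 1 -> `|w + w^-1| <= 2.
Proof. by move=> h; apply: le_trans (ler_normD _ _) _; rewrite normfV h invr1. Qed.

(* The conjugate of [w] is again a root of [X^2 - t X + 1], so it is [w] or
   [w^-1]; a real root would make [t^2 = (w - w^-1)^2 + 4 >= 4]. *)
Lemma unimodular_of_trace w t : w != 0 -> w + w^-1 = t -> t \is Num.real ->
  `|t| < 2 -> `|w| = 1.
Proof.
move=> hw ht hr hlt.
have hwc : w^* != 0 by rewrite conjC_eq0.
have htc : w^* + (w^*)^-1 = t by rewrite -fmorphV -rmorphD ht; apply/CrealP.
have : (w^* - w) * (w^* - w^-1) = 0.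
  have -> : (w^* - w) * (w^* - w^-1) = w^* * (w^* + (w^*)^-1 - (w + w^-1)).
    by field; rewrite hw hwc.
  by rewrite htc ht subrr mulr0.
move/eqP; rewrite mulf_eq0 !subr_eq0 => /orP [] /eqP e; last first.
  by have := normCK w; rewrite e mulfV // => /eqP; rewrite sqrp_eq1 ?normr_ge0 // => /eqP.
have wr : w \is Num.real by rewrite CrealE e.
have : 2 ^+ 2 <= `|t| ^+ 2.
  rewrite real_normK // -ht (_ : (w + w^-1) ^+ 2 = (w - w^-1) ^+ 2 + 2 ^+ 2); last by field.
  by rewrite lerDr -real_normK ?rpredB ?rpredV // exprn_ge0.
have lt2 : `|t| ^+ 2 < 2 ^+ 2 by rewrite ltr_pXn2r ?nnegrE ?normr_ge0 ?ler0n.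
by move/(lt_le_trans lt2); rewrite ltxx.
Qed.

Lemma normC_affine c e w : c \is Num.real -> e \is Num.real -> `|w| = 1 ->
  `|c + e * w| ^+ 2 = c ^+ 2 + c * e * (w + w^-1) + e ^+ 2.
Proof.
move=> hc he hw; have w0 : w != 0 by rewrite -normr_eq0 hw oner_eq0.
rewrite normCK rmorphD rmorphM /= (conj_Creal hc) (conj_Creal he) conj_unimodular //.
by field.
Qed.

Lemma norm_lt2 t : t \is Num.real ->
  0 < t + 2 -> 0 < 2 - t -> `|t| < 2.
Proof.
move=> hr h1 h2; rewrite real_ltr_norml //.
by apply/andP; split; rewrite -subr_gt0 ?opprK.
Qed.

Lemma affine_form_unimodular a b s w :
  a \is Num.real -> b \is Num.real -> s \is Num.real -> `|w| = 1 -> w + w^-1 = s ->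
  a ^+ 2 - a * b * s + b ^+ 2 = 4 - s ^+ 2 -> 4 - s ^+ 2 != 0 ->
  `|(2 * b - a * s) / (4 - s ^+ 2) + (2 * a - b * s) / (4 - s ^+ 2) * w| = 1.
Proof.
move=> ha hb hs hw hws hN hD; apply/eqP; rewrite -sqrp_eq1 ?normr_ge0 //.
rewrite normC_affine ?rpredM ?rpredV ?rpredB ?rpredM ?realn // hws.
have key : (2 * b - a * s) ^+ 2 + (2 * b - a * s) * (2 * a - b * s) * s + (2 * a - b * s) ^+ 2
  = (4 - s ^+ 2) * (a ^+ 2 - a * b * s + b ^+ 2) by ring.
apply/eqP; transitivity (((2 * b - a * s) ^+ 2 + (2 * b - a * s) * (2 * a - b * s) * s
  + (2 * a - b * s) ^+ 2) / (4 - s ^+ 2) ^+ 2); first by field.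
by rewrite key hN -expr2 divff // expf_neq0.
Qed.
End Unimodular.

(* [t] is the slope of the line through the rational point [(1, 0)]. *)
Lemma conic_rational_param (F : numFieldType) (x r : F) : x - 1 != 0 ->
  r ^+ 2 = (17 * x - 1) * (x - 1) ->
  exists t, [/\ t ^+ 2 - 17 != 0, x = (t ^+ 2 - 1) / (t ^+ 2 - 17)
              & r = 16 * t / (t ^+ 2 - 17)].
Proof.
move=> hx hr; exists (r / (x - 1)).
have e17 : (r / (x - 1)) ^+ 2 - 17 = 16 / (x - 1).
  by rewrite expr_div_n hr; field.
have e1 : (r / (x - 1)) ^+ 2 - 1 = 16 * x / (x - 1).
  by rewrite expr_div_n hr; field.
have h16 : (16 : F) != 0 by rewrite pnatr_eq0.
rewrite e1 e17; split; first by rewrite mulf_neq0 ?invr_eq0.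
- by field.
- by field.
Qed.

Lemma sum4 (V : nmodType) (F : 'I_4 -> V) : \sum_i F i = F 0 + F 1 + F 2 + F 3.
Proof.
rewrite !big_ord_recl big_ord0 addr0 !addrA.
by congr (F _ + F _ + F _ + F _); apply: val_inj.
Qed.

Definition weights4 (R : nzRingType) (w1 w2 w3 : R) (j : 'I_4) : R :=
  [:: 1; w1; w2; w3]`_j.

Lemma weights4_sum (R : nzRingType) (V : lmodType R) (A : 'I_4 -> V) (w1 w2 w3 : R) :
  \sum_j weights4 w1 w2 w3 j *: A j = A 0 + w1 *: A 1 + w2 *: A 2 + w3 *: A 3.
Proof. by rewrite sum4 /weights4 /= scale1r. Qed.

Ltac num_real := repeat first [ assumption | apply: realn | apply: rpred1
  | rewrite rpredN | apply: rpredB | apply: rpredD | apply: rpredM | apply: rpredX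
  | rewrite rpredV ].

Section Pq.
Variables (C : numClosedFieldType) (q : nat).
Hypothesis hq : (4 <= q)%N.
Local Notation Q := (q%:R : C).

Lemma Q_sub_gt0 k : (k < q)%N -> 0 < Q - k%:R.
Proof. by move=> hk; rewrite -natrB ?ltr0n ?subn_gt0 // ltnW. Qed.

Lemma Q_gt0 : 0 < Q. Proof. by rewrite ltr0n; lia. Qed.
Lemma Q_gt1 : 0 < Q - 1. Proof. by rewrite -[1]mulr1n Q_sub_gt0; lia. Qed.
Lemma Q_gt3 : 0 < Q - 3. Proof. by rewrite Q_sub_gt0; lia. Qed.
Lemma Q_sqr_gt5 : 0 < Q ^+ 2 - 5.
Proof. by rewrite -natrX -natrB ?ltr0n; nia. Qed.

Lemma Pq_real i j : Pq C q i j \is Num.real.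
Proof.
by rewrite mxE; case: (nat_of_ord i) => [|[|[|?]]]; case: (nat_of_ord j) => [|[|[|?]]];
  num_real.
Qed.

Lemma Pq_eigenvalue (w1 w2 w3 : C) i :
  \sum_j Pq C q i j * weights4 w1 w2 w3 j =
  Pq C q i 0 + Pq C q i 1 * w1 + Pq C q i 2 * w2 + Pq C q i 3 * w3.
Proof. by rewrite sum4 /weights4 /= mulr1. Qed.

Lemma unimodular_trace_neq (w : C) : `|w| = 1 -> w + w^-1 + Q ^+ 2 - 3 != 0.
Proof.
move=> hw; apply/eqP => h.
have := trace_unimodular_le2 hw.
rewrite (_ : w + w^-1 = - (q ^ 2 - 3)%:R); last first.
  rewrite natrB ?natrX; last by nia.
  by apply/eqP; rewrite -subr_eq0; apply/eqP; rewrite -h; ring.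
by rewrite normrN normr_nat ler_nat; nia.
Qed.
End Pq.

Ltac positivity hq := repeat first [ assumption
  | exact: (Q_gt0 _ hq) | exact: (Q_gt1 _ hq) | exact: (Q_gt3 _ hq) | exact: (Q_sqr_gt5 _ hq)
  | exact: ltr01 | by rewrite ltr0n | rewrite invr_gt0
  | apply: mulr_gt0 | apply: exprn_gt0 | apply: addr_gt0 ].

Section ConditionVI.
Variables (C : numClosedFieldType) (q : nat).
Hypothesis hq : (4 <= q)%N.
Local Notation Q := (q%:R : C).
Variable r : C.
Hypothesis hr : r ^+ 2 = (17 * Q - 1) * (Q - 1).
Local Notation s := (a01 q r).
Local Notation D := (4 - a01 q r ^+ 2).

(* The last three conditions say that [Q], [Q + 1] and [Q - 3] do not vanish,
   written as [field] normalizes them after the substitution. *)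
Lemma conic_param_q : exists t : C,
  [/\ Q = (t ^+ 2 - 1) / (t ^+ 2 - 17), r = 16 * t / (t ^+ 2 - 17)
    & [&& t ^+ 2 - 17 != 0, t ^+ 2 - 1 != 0, t ^+ 2 - 1 + (t ^+ 2 - 17) != 0
        & t ^+ 2 - 1 + -3 * (t ^+ 2 - 17) != 0]].
Proof.
have [t [h17 hQ hrt]] := conic_rational_param (lt0r_neq0 (Q_gt1 C hq)) hr.
exists t; split => //; rewrite h17 /=.
have hQ' : t ^+ 2 - 1 = Q * (t ^+ 2 - 17) by rewrite hQ mulfVK.
rewrite hQ' (_ : Q * _ + _ = (Q + 1) * (t ^+ 2 - 17)); last by ring.
rewrite (_ : Q * _ + _ = (Q - 3) * (t ^+ 2 - 17)); last by ring.
by rewrite !mulf_neq0 // lt0r_neq0 //; positivity hq.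
Qed.

Local Ltac conic_field :=
  have [? [-> -> /and4P[? ? ? ?]]] := conic_param_q;
  field; by repeat (apply/andP; split).

Lemma a_norm2 : a12 q r ^+ 2 - a12 q r * a02 q r * s + a02 q r ^+ 2 = D.
Proof. rewrite /a12 /a02 /a01; conic_field. Qed.

Lemma a_norm3 : a13 q r ^+ 2 - a13 q r * a03 q r * s + a03 q r ^+ 2 = D.
Proof. rewrite /a13 /a03 /a02 /a01; conic_field. Qed.

(* Stated without the denominator [D], so that [conic_field] only meets the
   denominators [Q], [Q + 1] and [Q - 3]. *)
Lemma Pq_row_norm_vi i :
  let c := D * Pq C q i 0 + Pq C q i 2 * (2 * a02 q r - a12 q r * s)
           + Pq C q i 3 * (2 * a03 q r - a13 q r * s) in
  let e := D * Pq C q i 1 + Pq C q i 2 * (2 * a12 q r - a02 q r * s)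
           + Pq C q i 3 * (2 * a13 q r - a03 q r * s) in
  c ^+ 2 + c * e * s + e ^+ 2 = (Q ^+ 2 - 1) * D ^+ 2.
Proof.
case: i => [[|[|[|[|//]]]] hi]; rewrite /= !mxE /= /a13 /a12 /a03 /a02 /a01; conic_field.
Qed.

Lemma a_real : r \is Num.real -> [/\ s \is Num.real, a02 q r \is Num.real,
  a03 q r \is Num.real, a12 q r \is Num.real & a13 q r \is Num.real].
Proof. by move=> hrr; split; rewrite /a01 /a02 /a03 /a12 /a13; num_real. Qed.

Lemma a01_add2 : s + 2 = ((Q + 2) * r + (3 * Q ^+ 2 + 7 * (Q - 1) + 5)) / (2 * Q * (Q + 1)).
Proof.
have hQ : Q != 0 by rewrite lt0r_neq0 // Q_gt0.
have hQ1 : Q + 1 != 0 by rewrite lt0r_neq0 //; positivity hq.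
by rewrite /a01; field; rewrite hQ hQ1.
Qed.

Lemma a01_norm_lt2 : 0 < r -> `|s| < 2.
Proof.
move=> rp; have hQ : Q != 0 by rewrite lt0r_neq0 // Q_gt0.
have hQ1 : Q + 1 != 0 by rewrite lt0r_neq0 //; positivity hq.
have [sr _ _ _ _] := a_real (gtr0_real rp).
apply: norm_lt2 => //; first by rewrite a01_add2; positivity hq.
rewrite (_ : 2 - s = ((5 * Q ^+ 2 + Q + 2) - (Q + 2) * r) / (2 * Q * (Q + 1)));
  last by rewrite /a01; field; rewrite hQ hQ1.
apply: divr_gt0; last by positivity hq.
have sqr_lt : ((Q + 2) * r) ^+ 2 < (5 * Q ^+ 2 + Q + 2) ^+ 2.
  rewrite -subr_gt0 exprMn hr (_ : _ - _ = 8 * Q * (Q + 1) * (Q - 3) ^+ 2); last by ring.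
  by positivity hq.
by rewrite subr_gt0 -(ltr_pXn2r (n := 2)) ?nnegrE //; apply: ltW; positivity hq.
Qed.

Lemma a01_lt_m2 : r < 0 -> s < - 2.
Proof.
move=> rn; rewrite -subr_lt0 opprK a01_add2 pmulr_llt0; last by positivity hq.
have rho_pos : 0 < - ((Q + 2) * r) by rewrite -mulrN mulr_gt0 ?oppr_gt0 //; positivity hq.
have sqr_lt : (3 * Q ^+ 2 + 7 * (Q - 1) + 5) ^+ 2 < (- ((Q + 2) * r)) ^+ 2.
  rewrite -subr_gt0 sqrrN exprMn hr.
  rewrite (_ : _ - _ = 8 * Q * (Q + 1) * (Q ^+ 2 - 5)); last by ring.
  by positivity hq.
rewrite -(opprK ((Q + 2) * r)) addrC subr_lt0.
by rewrite -(ltr_pXn2r (n := 2)) ?nnegrE //; apply: ltW; positivity hq.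
Qed.

Lemma r_gt0_of_unimodular (w : C) : r \is Num.real -> `|w| = 1 -> w + w^-1 = s -> 0 < r.
Proof.
move=> hrr hw hs.
have [sr _ _ _ _] := a_real hrr.
have hs2 : - 2 <= s.
  by have := trace_unimodular_le2 hw; rewrite hs real_ler_norml // => /andP[].
have r0 : r != 0.
  apply: contraTneq (_ : 0 < r ^+ 2) => [->|]; first by rewrite expr0n ltxx.
  by rewrite hr (_ : 17 * _ - 1 = 17 * (Q - 1) + 16); [positivity hq | ring].
rewrite lt_def r0 /=; move: hrr; rewrite realE => /orP [//| rle0].
have rn : r < 0 by rewrite lt_def eq_sym r0.
by have := lt_le_trans (a01_lt_m2 rn) hs2; rewrite ltxx.
Qed.
End ConditionVI.

Section PqScheme.
Variables (C : numClosedFieldType) (q : nat).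
Hypothesis hq : (4 <= q)%N.
Local Notation Q := (q%:R : C).
Variable A : 'I_4 -> 'M[C]_((q ^ 2).-1).
Hypotheses (hA : sym_assoc_scheme A) (hP : first_eigenmatrix A (Pq C q)).
Local Notation W w1 w2 w3 := (A 0 + w1 *: A 1 + w2 *: A 2 + w3 *: A 3).

Lemma Pq_hadamard_weights_unimodular (w1 w2 w3 : C) :
  complex_hadamard (W w1 w2 w3) -> `|w1| = 1 /\ `|w3| = 1.
Proof.
rewrite -weights4_sum => -[hW _].
have hQ2 : Q - 2 != 0 by rewrite gt_eqF // Q_sub_gt0 //; lia.
have hA1 : A 1 != 0.
  apply: (adjacency_neq0 hP); rewrite mxE /= (_ : _ - _ = Q * (Q - 2) / 2); last by field.
  by rewrite !mulf_neq0 ?invr_eq0 ?pnatr_eq0 //; lia.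
have hA3 : A 3 != 0 by apply: (adjacency_neq0 hP); rewrite mxE.
by split; [exact: (weight_unimodular_of_entries hA hA1 hW)
         | exact: (weight_unimodular_of_entries hA hA3 hW)].
Qed.

Lemma Pq_hadamard_of_affine_eigenvalues (w1 w2 w3 u : C) (c e : 'I_4 -> C) :
  `|w1| = 1 -> `|w2| = 1 -> `|w3| = 1 -> `|u| = 1 ->
  (forall i, Pq C q i 0 + Pq C q i 1 * w1 + Pq C q i 2 * w2 + Pq C q i 3 * w3 =
             c i + e i * u) ->
  (forall i, c i \is Num.real /\ e i \is Num.real) ->
  (forall i, c i ^+ 2 + c i * e i * (u + u^-1) + e i ^+ 2 = Q ^+ 2 - 1) ->
  complex_hadamard (W w1 w2 w3).
Proof.
move=> h1 h2 h3 hu hce hreal hnorm.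
rewrite -weights4_sum; apply: (hadamard_of_eigenvalues hA hP).
- by move=> i j; apply: Pq_real.
- by case=> [[|[|[|[|//]]]] hj]; rewrite /weights4 /= ?normr1.
move=> i; have [hc he] := hreal i.
rewrite Pq_eigenvalue hce normC_affine // hnorm -natrX -subn1 natrB //; nia.
Qed.

Lemma hadamard_iii (w1 w2 w3 : C) : w1 != 0 -> cond_iii q w1 w2 w3 ->
  complex_hadamard (W w1 w2 w3).
Proof.
move=> hw [ht [-> ->]].
have hQ4 : 0 < Q ^+ 2 - 4 by rewrite -natrX -natrB ?ltr0n; nia.
have hu : `|w1| = 1.
  have ht_real : 2 * (Q ^+ 2 - 6) / (Q ^+ 2 - 4) \is Num.real by num_real.
  apply: (unimodular_of_trace hw ht ht_real); apply: norm_lt2 => //.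
  - rewrite (_ : _ + 2 = 4 * (Q ^+ 2 - 5) / (Q ^+ 2 - 4)); last by field; rewrite gt_eqF.
    by positivity hq.
  - rewrite (_ : 2 - _ = 4 / (Q ^+ 2 - 4)); last by field; rewrite gt_eqF.
    by positivity hq.
apply: (Pq_hadamard_of_affine_eigenvalues (u := w1) (c := fun i => Pq C q i 0 - Pq C q i 2)
          (e := fun i => Pq C q i 1 + Pq C q i 3)); rewrite ?normrN ?normr1 //.
- by move=> i; ring.
- by move=> i; rewrite rpredB ?rpredD ?Pq_real.
move=> i; rewrite ht; case: i => [[|[|[|[|//]]]] hi]; rewrite !mxE /=;
  by field; rewrite gt_eqF.
Qed.

Lemma hadamard_iv (w1 w2 w3 : C) : w2 != 0 -> cond_iv q w1 w2 w3 ->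
  complex_hadamard (W w1 w2 w3).
Proof.
move=> hw [-> [-> ht]].
have hQ : Q != 0 by rewrite gt_eqF ?(Q_gt0 _ hq).
have hu : `|w2| = 1.
  have ht_real : - (2 * (Q ^+ 2 - 2)) / Q ^+ 2 \is Num.real by num_real.
  apply: (unimodular_of_trace hw ht ht_real); apply: norm_lt2 => //.
  - rewrite (_ : _ + 2 = 4 / Q ^+ 2); last by field.
    by positivity hq.
  - rewrite (_ : 2 - _ = 4 * ((Q - 1) * (Q + 1)) / Q ^+ 2); last by field.
    by positivity hq.
apply: (Pq_hadamard_of_affine_eigenvalues (u := w2)
          (c := fun i => Pq C q i 0 + Pq C q i 1 + Pq C q i 3) (e := fun i => Pq C q i 2));
  rewrite ?normr1 //.
- by move=> i; ring.
- by move=> i; rewrite !rpredD ?Pq_real.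
by move=> i; rewrite ht; case: i => [[|[|[|[|//]]]] hi]; rewrite !mxE /=; field.
Qed.

Lemma hadamard_v (w1 w2 w3 : C) : w1 != 0 -> cond_v q w1 w2 w3 ->
  complex_hadamard (W w1 w2 w3).
Proof.
move=> hw [ht [-> ->]].
have hQ : Q != 0 by rewrite gt_eqF ?(Q_gt0 _ hq).
have ht_real : - (2 / Q) \is Num.real by num_real.
have hu : `|w1| = 1.
  apply: (unimodular_of_trace hw ht ht_real); apply: norm_lt2 => //.
  - rewrite (_ : _ + 2 = 2 * (Q - 1) / Q); last by field.
    by positivity hq.
  - rewrite (_ : 2 - _ = 2 * (Q + 1) / Q); last by field.
    by positivity hq.
apply: (Pq_hadamard_of_affine_eigenvalues (u := w1)
          (c := fun i => Pq C q i 0 + Pq C q i 3 + Pq C q i 2 * - (2 / Q))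
          (e := fun i => Pq C q i 1 - Pq C q i 2)); rewrite ?normfV ?hu ?invr1 ?normr1 //.
- by move=> i; rewrite -ht; ring.
- by move=> i; rewrite rpredB ?rpredD ?rpredM ?Pq_real.
by move=> i; rewrite ht; case: i => [[|[|[|[|//]]]] hi]; rewrite !mxE /=; field.
Qed.

Lemma hadamard_vi (r w1 w2 w3 : C) : w1 != 0 -> w2 != 0 -> w3 != 0 -> 0 < r ->
  cond_vi q r w1 w2 w3 -> complex_hadamard (W w1 w2 w3).
Proof.
move=> hw1 hw2 hw3 rp [hrr hr hs e2 e3].
set s := a01 q r in hs e2 e3 *; set D := 4 - s ^+ 2.
have [sr a2r a3r a12r a13r] := a_real q hrr.
have s_lt2 : `|s| < 2 := a01_norm_lt2 hq hr rp.
have hD : D != 0.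
  rewrite lt0r_neq0 // subr_gt0 -real_normK // (_ : 4 = 2 ^+ 2); last by rewrite expr2 -natrM.
  by rewrite ltr_pXn2r ?nnegrE ?normr_ge0 ?ler0n.
have hu : `|w1| = 1 := unimodular_of_trace hw1 hs sr s_lt2.
have den_neq0 (a b : C) : (w1 ^+ 2 - 1) / (a * w1 - b) != 0 -> a * w1 - b != 0.
  by apply: contraNneq => ->; rewrite invr0 mulr0.
rewrite e2 in hw2; rewrite e3 in hw3.
rewrite e2 (ratio_affine_of_trace hw1 hs (a_norm2 hq hr) hD (den_neq0 _ _ hw2)).
rewrite e3 (ratio_affine_of_trace hw1 hs (a_norm3 hq hr) hD (den_neq0 _ _ hw3)).
apply: (Pq_hadamard_of_affine_eigenvalues (u := w1)
  (c := fun i => Pq C q i 0 + Pq C q i 2 * ((2 * a02 q r - a12 q r * s) / D)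
                 + Pq C q i 3 * ((2 * a03 q r - a13 q r * s) / D))
  (e := fun i => Pq C q i 1 + Pq C q i 2 * ((2 * a12 q r - a02 q r * s) / D)
                 + Pq C q i 3 * ((2 * a13 q r - a03 q r * s) / D))) => //.
- by apply: affine_form_unimodular; rewrite ?(a_norm2 hq hr).
- by apply: affine_form_unimodular; rewrite ?(a_norm3 hq hr).
- by move=> i; ring.
- move=> i; split; num_real; exact: Pq_real.
move=> i; rewrite hs; apply: (mulIf (expf_neq0 2 hD)).
rewrite -(Pq_row_norm_vi hq hr i) /=; move: hD; rewrite /D /s => hD; by field.
Qed.
End PqScheme.

Theorem corollary4p2 (C : numClosedFieldType) (q : nat) (hq : (4 <= q)%N)
    (A : 'I_4 -> 'M[C]_((q ^ 2).-1))
    (hA : sym_assoc_scheme A) (hP : first_eigenmatrix A (Pq C q))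
    (w1 w2 w3 : C) (hw1 : w1 != 0) (hw2 : w2 != 0) (hw3 : w3 != 0)
    (hcond : cond_i q w1 w2 w3 \/ cond_ii q w1 w2 w3 \/ cond_iii q w1 w2 w3 \/
             cond_iv q w1 w2 w3 \/ cond_v q w1 w2 w3 \/
             exists r : C, cond_vi q r w1 w2 w3) :
  complex_hadamard (A 0 + w1 *: A 1 + w2 *: A 2 + w3 *: A 3)
  <-> (cond_iii q w1 w2 w3 \/ cond_iv q w1 w2 w3 \/ cond_v q w1 w2 w3 \/
       exists r : C, 0 < r /\ cond_vi q r w1 w2 w3).
Proof.
split=> [had | ].
  have [u1 u3] := Pq_hadamard_weights_unimodular hq hA hP had.
  have w3_not_i := unimodular_trace_neq hq u3.
  case: hcond => [[_ [_ h]] | [[h _] | [c | [c | [c | [r c]]]]]].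
  - by move: w3_not_i; rewrite h eqxx.
  - by move: w3_not_i; rewrite h eqxx.
  - by left.
  - by right; left.
  - by right; right; left.
  right; right; right; exists r; split => //.
  by case: c => hrr hr hs _ _; exact: (r_gt0_of_unimodular hq hr hrr u1 hs).
case=> [c | [c | [c | [r [rp c]]]]].
- exact: (hadamard_iii hq hA hP hw1 c).
- exact: (hadamard_iv hq hA hP hw2 c).
- exact: (hadamard_v hq hA hP hw1 c).
- exact: (hadamard_vi hq hA hP hw1 hw2 hw3 rp c).
Qed.
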